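(* Let $\mathcal{C}=\{\mathcal{N}_1,\dots,\mathcal{N}_k\}$ be a clustering of a finite set of elements into $k$ clusters in which every element belongs to at least one and at most two clusters. If for every triple of distinct clusters $p,q,r\in[k]$ we have $\mathcal{N}_p\setminus(\mathcal{N}_q\cup\mathcal{N}_r)\neq\emptyset$, then every cluster $\mathcal{N}_i$ is maximal.
   Context: Two elements test positive if they belong to a common cluster. A cluster $\mathcal{N}_i$ is maximal if there is no element $x\notin\mathcal{N}_i$ that tests positive with every element of $\mathcal{N}_i$. *)

From mathcomp Require Import all_boot.
Set Implicit Arguments. Unset Strict Implicit. Unset Printing Implicit Defensive.

Definition tests_positive (T : finType) (k : nat) (N : 'I_k -> {set T}) (x y : T) : Prop :=
  exists j : 'I_k, x \in N j /\ y \in N j.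

Definition maximal_cluster (T : finType) (k : nat) (N : 'I_k -> {set T}) (i : 'I_k) : Prop :=
  ~ exists x : T, x \notin N i /\ (forall y, y \in N i -> tests_positive N x y).

Definition nclusters (T : finType) (k : nat) (N : 'I_k -> {set T}) (x : T) : nat :=
  #|[set j : 'I_k | x \in N j]|.

From mathcomp Require Import all_boot.

Set Implicit Arguments.
Unset Strict Implicit.
Unset Printing Implicit Defensive.

(* If x lies outside N i but tests positive with all of N i, cover the (at most
   two) clusters containing x by two clusters q, r different from i.  An element
   of N i outside N q and N r then shares no cluster with x. *)

Lemma exists_notin_set2 (T : finType) (a b : T) :
  2 < #|T| -> exists z, z \notin [set a; b].
Proof.
move=> hT; have /subsetPn [z _ zab] : ~~ ([set: T] \subset [set a; b]).
  apply: contraTN hT => /subset_leq_card; rewrite cardsT cards2 -leqNgt.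
  by move/leq_trans; apply; case: (a != b).
by exists z.
Qed.

Lemma pair_cover (T : finType) (S : {set T}) (i : T) :
  2 < #|T| -> #|S| <= 2 -> i \notin S ->
  exists q r, [/\ q != r, q != i, r != i & S \subset [set q; r]].
Proof.
move=> hT hS iS.
have cover_single a : a != i -> S \subset [set a] -> exists q r,
    [/\ q != r, q != i, r != i & S \subset [set q; r]].
  move=> ai Sa; have [r] := exists_notin_set2 i a hT.
  rewrite !inE negb_or => /andP [ri ra].
  exists a, r; split; rewrite // 1?eq_sym //.
  by apply: subset_trans Sa _; apply/subsetP => z; rewrite !inE => ->.
move: hS; rewrite leq_eqVlt ltnS leq_eqVlt ltnS leqn0.
case/or3P => [/cards2P [q [r [qr defS]]] | /cards1P [a defS] | /eqP/cards0_eq defS].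
- exists q, r; rewrite -defS; split=> //.
    by apply: contraNneq iS => <-; rewrite defS !inE eqxx.
  by apply: contraNneq iS => <-; rewrite defS !inE eqxx orbT.
- apply: cover_single; last by rewrite defS.
  by apply: contraNneq iS => <-; rewrite defS inE.
- have [a] := exists_notin_set2 i i hT; rewrite !inE orbb => ai.
  by apply: (cover_single a) => //; rewrite defS sub0set.
Qed.

Lemma tests_positive_cover (T : finType) (k : nat) (N : 'I_k -> {set T})
    (x y : T) (q r : 'I_k) :
  tests_positive N x y -> [set j | x \in N j] \subset [set q; r] ->
  y \in N q :|: N r.
Proof.
move=> [j [xj yj]] /subsetP /(_ j); rewrite !inE xj => /(_ isT).
by case/orP => /eqP <-; rewrite yj ?orbT.
Qed.

Theorem lemma6 (T : finType) (k : nat) (N : 'I_k -> {set T}) :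
  2 < k ->
  (forall x : T, 1 <= nclusters N x <= 2) ->
  (forall p q r : 'I_k, p != q -> p != r -> q != r ->
     N p :\: (N q :|: N r) != set0) ->
  forall i : 'I_k, maximal_cluster N i.
Proof.
move=> hk hcl hsep i [x [xNi hpos]].
have /andP [_ le2] := hcl x.
have iNx : i \notin [set j | x \in N j] by rewrite inE.
rewrite -[k]card_ord in hk.
have [q [r [qr qi ri xqr]]] := pair_cover hk le2 iNx.
have /set0Pn [y] : N i :\: (N q :|: N r) != set0
  by apply: hsep; rewrite // eq_sym.
rewrite inE => /andP [yqr yi].
by rewrite (tests_positive_cover (hpos y yi) xqr) in yqr.
Qed.
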